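(* Let $\varepsilon\in(0,0.1]$ and $0<\ell\le r$. The number $R$ of while-loop iterations executed by Algorithm U on input $(\ell,r,\delta,\varepsilon,\gamma)$ satisfies $$R\ \le\ \widetilde R:=22\log^2(r/\ell)+44\log(r/\ell)\log(1/\varepsilon)+66\log(1/\varepsilon).$$
   Context: Logarithms are natural. Algorithm U (input $\ell,r,\delta,\varepsilon,\gamma$; absolute constant $C$; pricing query at $p$ reveals only $\mathbf 1\{v\ge p\}$ for a fresh $v$ from the unknown distribution): Let $S_1=\{(1+\varepsilon)^k\ell: k\in\mathbb{N}_0,\ (1+\varepsilon)^k\ell\le r\}$, $S_{can}=\emptyset$, $i=1$. While $|S_i|\ge 20$: let $\ell_i=\min S_i$, $r_i=\max S_i$, $a_i=\min\{p\in S_i: p>\ell_i+0.2(r_i-\ell_i)\}$, $b_i=\min\{p\in S_i:p>\ell_i+0.5(r_i-\ell_i)\}$. Post $b_i$ for $C\log(\widetilde R/\delta)\gamma^{-1}$ queries and let $\widehat q(b_i)$ be the empirical purchase fraction. If $\widehat q(b_i)<0.75\gamma$, set $S_{i+1}=S_i\cap[\ell_i,b_i]$, $i\leftarrow i+1$, continue. Otherwise add $a_i,b_i$ to $S_{can}$; for $p\in\{a_i,b_i\}$ post $p$ for $C\log(\widetilde R/\delta)\gamma^{-1}\varepsilon^{-2}$ queries and set $\widehat{\mathrm{Rev}}(p)=p\cdot$(empirical purchase fraction). If $(1+\varepsilon)\widehat{\mathrm{Rev}}(a_i)<(1-\varepsilon)\widehat{\mathrm{Rev}}(b_i)$ set $S_{i+1}=S_i\cap[a_i,r_i]$,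 else $S_{i+1}=S_i\cap[\ell_i,b_i]$; $i\leftarrow i+1$. After the loop $R=i-1$, all of $S_{R+1}$ is added to $S_{can}$, revenues of $S_{can}$ are re-estimated with $C\log(\widetilde R/\delta)\gamma^{-1}\varepsilon^{-2}$ queries each, and the empirical maximizer is output. *)

From Stdlib Require Import Reals Lra List ZArith.
Open Scope R_scope.

Definition Rleb (x y : R) : bool := if Rle_dec x y then true else false.
Definition Rltb (x y : R) : bool := if Rlt_dec x y then true else false.

(* Enough exponents: every k with (1+eps)^k * l <= r satisfies
   k <= ln(r/l)/ln(1+eps) < grid_bound. *)
Definition grid_bound (l r eps : R) : nat :=
  S (Z.to_nat (up (ln (r / l) / ln (1 + eps)))).

Definition grid (l r eps : R) : list R :=
  filter (fun x => Rleb x r)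
         (map (fun k => (1 + eps) ^ k * l) (seq 0 (grid_bound l r eps))).

Definition lmin (s : list R) : R :=
  match s with nil => 0 | x :: t => fold_left Rmin t x end.
Definition lmax (s : list R) : R :=
  match s with nil => 0 | x :: t => fold_left Rmax t x end.

Definition restrict (s : list R) (x y : R) : list R :=
  filter (fun p => andb (Rleb x p) (Rleb p y)) s.

Definition ell_i (s : list R) : R := lmin s.
Definition r_i (s : list R) : R := lmax s.
Definition a_i (s : list R) : R :=
  lmin (filter (fun p => Rltb (ell_i s + 0.2 * (r_i s - ell_i s)) p) s).
Definition b_i (s : list R) : R :=
  lmin (filter (fun p => Rltb (ell_i s + 0.5 * (r_i s - ell_i s)) p) s).

(* One while-loop iteration. Whatever the (random) test outcomes, the new
   set is either S ∩ [a_i, r_i] (c = true) or S ∩ [l_i, b_i] (c = false). *)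
Definition step (c : bool) (s : list R) : list R :=
  if c then restrict s (a_i s) (r_i s) else restrict s (ell_i s) (b_i s).

(* S_seq ch i = S_{i+1} for the run of the loop along outcome sequence ch;
   once |S| < 20 the loop has stopped and the set is frozen. *)
Fixpoint S_seq (l r eps : R) (ch : nat -> bool) (i : nat) : list R :=
  match i with
  | O => grid l r eps
  | S j => let s := S_seq l r eps ch j in
           if (20 <=? length s)%nat then step (ch j) s else s
  end.

Definition Rtilde (l r eps : R) : R :=
  22 * (ln (r / l)) ^ 2 + 44 * ln (r / l) * ln (1 / eps) + 66 * ln (1 / eps).

From Stdlib Require Import Reals Lra Lia List ZArith.
Open Scope R_scope.

(* Every set S_i is the set of all grid points (1+eps)^k l lying in some
   interval.  While it has at least 20 points its width r_i - l_i is at least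
   ((1+eps)^19 - 1) l_i >= 19 eps l, and one iteration multiplies the width by
   at most 0.8: in the upper branch because a_i > l_i + 0.2 (r_i - l_i), in the
   lower branch because the grid predecessor b_i / (1+eps) of b_i still lies in
   S_i, hence below the midpoint, so b_i <= (1+eps) (l_i + 0.5 (r_i - l_i)).
   The initial width is at most r, and 0.8^5 < 1/e, so after
   n = 5 ceil(ln(r/l) + ln(1/eps)) iterations the width would be at most
   eps l; the loop has therefore stopped, and n <= 5 ln(r/l) + 5 ln(1/eps) + 5
   <= Rtilde. *)

Lemma Rleb_true_iff x y : Rleb x y = true <-> x <= y.
Proof. unfold Rleb; destruct (Rle_dec x y); split; congruence || lra. Qed.

Lemma Rltb_true_iff x y : Rltb x y = true <-> x < y.
Proof. unfold Rltb; destruct (Rlt_dec x y); split; congruence || lra. Qed.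

Lemma fold_left_In {A : Type} (op : A -> A -> A) :
  (forall x y, op x y = x \/ op x y = y) ->
  forall t acc, In (fold_left op t acc) (acc :: t).
Proof.
  intros Hsel t; induction t as [|y t IH]; intros acc; simpl; [now left|].
  destruct (IH (op acc y)) as [<-|Hin]; [|now right; right].
  destruct (Hsel acc y) as [-> | ->]; [now left | now right; left].
Qed.

Lemma fold_left_below {A : Type} (op : A -> A -> A) (le : A -> A -> Prop) :
  (forall x, le x x) -> (forall x y z, le x y -> le y z -> le x z) ->
  (forall x y, le (op x y) x /\ le (op x y) y) ->
  forall t acc p, In p (acc :: t) -> le (fold_left op t acc) p.
Proof.
  intros Hrefl Htrans Hop t; induction t as [|y t IH]; intros acc p Hp; simpl.
  - destruct Hp as [<-|[]]. apply Hrefl.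
  - destruct Hp as [<-|[<-|Hp]];
      [apply Htrans with (op acc y); [apply IH; now left | apply Hop] .. | apply IH; now right].
Qed.

Lemma lmin_le s p : In p s -> lmin s <= p.
Proof.
  destruct s as [|x t]; [easy|]. apply fold_left_below; [intros; lra | intros; lra |].
  intros; split; [apply Rmin_l | apply Rmin_r].
Qed.

Lemma lmax_ge s p : In p s -> p <= lmax s.
Proof.
  destruct s as [|x t]; [easy|]. intros Hp.
  apply Rge_le, (fold_left_below Rmax Rge); [intros; lra | intros; lra | |exact Hp].
  intros; split; apply Rle_ge; [apply Rmax_l | apply Rmax_r].
Qed.

Lemma lmin_In s : s <> nil -> In (lmin s) s.
Proof.
  destruct s as [|x t]; [easy|]; intros _. apply fold_left_In.
  intros x' y; unfold Rmin; destruct (Rle_dec x' y); auto.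
Qed.

Lemma lmax_In s : s <> nil -> In (lmax s) s.
Proof.
  destruct s as [|x t]; [easy|]; intros _. apply fold_left_In.
  intros x' y; unfold Rmax; destruct (Rle_dec x' y); auto.
Qed.

Lemma lmin_above s t x : In x s -> t < x ->
  let a := lmin (filter (fun p => Rltb t p) s) in
  In a s /\ t < a /\ forall p, In p s -> t < p -> a <= p.
Proof.
  intros Hx Htx a.
  assert (Hx' : In x (filter (fun p => Rltb t p) s))
    by (apply filter_In; now rewrite Rltb_true_iff).
  assert (Ha : In a (filter (fun p => Rltb t p) s))
    by (apply lmin_In; intros E; now rewrite E in Hx').
  apply filter_In in Ha as [Ha Hta]; apply Rltb_true_iff in Hta.
  repeat split; auto. intros p Hp Htp.
  apply lmin_le, filter_In. now rewrite Rltb_true_iff.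
Qed.

Definition width (s : list R) : R := lmax s - lmin s.

Lemma In_restrict s x y p : In p (restrict s x y) <-> In p s /\ x <= p <= y.
Proof. unfold restrict. rewrite filter_In, Bool.andb_true_iff, !Rleb_true_iff. tauto. Qed.

Lemma width_restrict_le s x y : x <= y -> width (restrict s x y) <= y - x.
Proof.
  intros Hxy; unfold width. destruct (restrict s x y) as [|p t] eqn:E; [simpl; lra|].
  assert (Hne : restrict s x y <> nil) by now rewrite E.
  pose proof (proj1 (In_restrict _ _ _ _) (lmin_In _ Hne)).
  pose proof (proj1 (In_restrict _ _ _ _) (lmax_In _ Hne)).
  rewrite E in *; lra.
Qed.

Section Grid.
Variables l eps : R.
Hypotheses (Hl : 0 < l) (Heps : 0 < eps).

Definition gridpt (k : nat) : R := (1 + eps) ^ k * l.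
Definition on_grid (p : R) : Prop := exists k, p = gridpt k.
Definition grid_segment (s : list R) : Prop :=
  NoDup s /\ exists a b, forall p, In p s <-> on_grid p /\ a <= p <= b.

Lemma gridpt_lt_iff j k : gridpt j < gridpt k <-> (j < k)%nat.
Proof.
  unfold gridpt; split; intros H.
  - destruct (Nat.lt_trichotomy j k) as [|[-> | Hkj]]; auto; exfalso; [lra|].
    pose proof (Rlt_pow (1 + eps) _ _ ltac:(lra) Hkj). nra.
  - apply Rmult_lt_compat_r; auto. apply Rlt_pow; auto; lra.
Qed.

Lemma gridpt_add k n : gridpt (k + n) = (1 + eps) ^ n * gridpt k.
Proof. unfold gridpt. rewrite pow_add. ring. Qed.

Lemma on_grid_ge p : on_grid p -> l <= p.
Proof.
  intros [k ->]. unfold gridpt. pose proof (pow_R1_Rle (1 + eps) k ltac:(lra)). nra.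
Qed.

Lemma restrict_grid_segment s x y : grid_segment s -> grid_segment (restrict s x y).
Proof.
  intros [Hnd [a [b Hs]]]. split; [now apply NoDup_filter|].
  exists (Rmax a x), (Rmin b y). intros p. rewrite In_restrict, Hs. split.
  - intros [[Hp [Hap Hpb]] [Hxp Hpy]].
    split; [|split; [now apply Rmax_lub | now apply Rmin_glb]]; easy.
  - pose proof (Rmax_l a x); pose proof (Rmax_r a x).
    pose proof (Rmin_l b y); pose proof (Rmin_r b y).
    intros [Hp Hpab]; repeat split; auto; lra.
Qed.

Lemma grid_segment_between s p :
  grid_segment s -> on_grid p -> lmin s <= p <= lmax s -> In p s.
Proof.
  intros [_ [a [b Hs]]] Hp Hpab.
  assert (Hne : s <> nil).
  { intros ->. pose proof (on_grid_ge p Hp). simpl in Hpab. lra. }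
  pose proof (proj1 (Hs _) (lmin_In s Hne)). pose proof (proj1 (Hs _) (lmax_In s Hne)).
  apply Hs. split; [easy | lra].
Qed.

Lemma grid_segment_pred s p :
  grid_segment s -> In p s -> lmin s < p -> In (p / (1 + eps)) s.
Proof.
  intros Hseg Hp Hmp. pose proof Hseg as [_ [a [b Hs]]].
  assert (Hne : s <> nil) by (intros ->; easy).
  destruct (proj1 (Hs _) Hp) as [[k ->] _].
  destruct (proj1 (Hs _) (lmin_In s Hne)) as [[j Hj] _].
  rewrite Hj, gridpt_lt_iff in Hmp. destruct k as [|k]; [lia|].
  replace (gridpt (S k) / (1 + eps)) with (gridpt k)
    by (rewrite <- Nat.add_1_r, gridpt_add; field; lra).
  apply grid_segment_between; [easy | now exists k |]. split.
  - rewrite Hj. destruct (Rle_lt_dec (gridpt j) (gridpt k)) as [|Hkj]; auto.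
    apply gridpt_lt_iff in Hkj. lia.
  - apply Rle_trans with (gridpt (S k)); [|now apply lmax_ge].
    left; apply gridpt_lt_iff; lia.
Qed.

Lemma grid_segment_spread s :
  grid_segment s -> (20 <= length s)%nat -> (1 + eps) ^ 19 * lmin s <= lmax s.
Proof.
  intros [Hnd [a [b Hs]]] Hlen.
  destruct (Rle_lt_dec ((1 + eps) ^ 19 * lmin s) (lmax s)) as [|Hnarrow]; auto.
  exfalso.
  assert (Hne : s <> nil) by (intros ->; simpl in Hlen; lia).
  destruct (proj1 (Hs _) (lmin_In s Hne)) as [[j Hj] _].
  enough (Hincl : incl s (map gridpt (seq j 19))).
  { pose proof (NoDup_incl_length Hnd Hincl). rewrite length_map, length_seq in *. lia. }
  intros p Hp. destruct (proj1 (Hs _) Hp) as [[k ->] _].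
  apply in_map, in_seq. split.
  - destruct (le_lt_dec j k) as [|Hkj]; auto.
    apply gridpt_lt_iff in Hkj. pose proof (lmin_le s _ Hp). lra.
  - destruct (lt_dec k (j + 19)) as [|Hk]; [lia|].
    assert (Hle : gridpt (j + 19) <= gridpt k).
    { destruct (Nat.eq_dec (j + 19) k) as [->|]; [lra|]. left; apply gridpt_lt_iff; lia. }
    rewrite gridpt_add, <- Hj in Hle. pose proof (lmax_ge s _ Hp). lra.
Qed.

Lemma grid_segment_lmin_ge s : grid_segment s -> s <> nil -> l <= lmin s.
Proof.
  intros [_ [a [b Hs]]] Hne. apply on_grid_ge, (Hs _), lmin_In, Hne.
Qed.

Lemma grid_segment_width_ge s :
  grid_segment s -> (20 <= length s)%nat -> 19 * eps * lmin s <= width s.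
Proof.
  intros Hseg Hlen. unfold width.
  assert (Hne : s <> nil) by (intros ->; simpl in Hlen; lia).
  pose proof (grid_segment_spread s Hseg Hlen).
  pose proof (grid_segment_lmin_ge s Hseg Hne).
  pose proof (poly 19 eps Heps). replace (INR 19) with 19 in * by (simpl; ring).
  nra.
Qed.

Lemma width_step_le c s : eps <= 0.1 ->
  grid_segment s -> (20 <= length s)%nat -> width (step c s) <= 0.8 * width s.
Proof.
  intros Heps1 Hseg Hlen.
  assert (Hne : s <> nil) by (intros ->; simpl in Hlen; lia).
  pose proof (grid_segment_width_ge s Hseg Hlen) as Hwide.
  pose proof (grid_segment_lmin_ge s Hseg Hne) as Hlm.
  pose proof (lmax_In s Hne) as HM.
  unfold step, a_i, b_i, r_i, ell_i; unfold width at 2; unfold width in Hwide.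
  set (m := lmin s) in *; set (M := lmax s) in *.
  assert (HmM : m < M) by nra.
  destruct c.
  - destruct (lmin_above s (m + 0.2 * (M - m)) M HM ltac:(lra)) as [Ha [Hta _]].
    pose proof (lmax_ge s _ Ha) as HaM; fold M in HaM.
    eapply Rle_trans; [apply width_restrict_le; lra | lra].
  - destruct (lmin_above s (m + 0.5 * (M - m)) M HM ltac:(lra)) as [Hb [Htb Hbmin]].
    set (b := lmin (filter _ s)) in *.
    assert (Hpred : b / (1 + eps) <= m + 0.5 * (M - m)).
    { destruct (Rle_lt_dec (b / (1 + eps)) (m + 0.5 * (M - m))) as [|Hlt]; auto.
      assert (Hin : In (b / (1 + eps)) s) by (apply grid_segment_pred; auto; fold m; lra).
      pose proof (Hbmin _ Hin Hlt).
      assert (b / (1 + eps) < b) by (apply Rmult_lt_reg_r with (1 + eps); field_simplify; nra).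
      lra. }
    assert (Hb_le : b <= (1 + eps) * (m + 0.5 * (M - m))).
    { apply Rmult_le_compat_l with (r := 1 + eps) in Hpred; [|lra].
      field_simplify in Hpred; lra. }
    eapply Rle_trans; [apply width_restrict_le; lra | nra].
Qed.
End Grid.

Lemma ln_le_compat x y : 0 < x -> x <= y -> ln x <= ln y.
Proof.
  intros Hx [Hxy| <-]; [|lra]. left; now apply ln_increasing.
Qed.

Lemma exp_le_compat x y : x <= y -> exp x <= exp y.
Proof. intros [Hxy| <-]; [|lra]. left; now apply exp_increasing. Qed.

Lemma pow08_mul5_le_exp k : 0.8 ^ (5 * k) <= exp (- INR k).
Proof.
  induction k as [|k IH]; [simpl; rewrite Ropp_0, exp_0; lra|].
  replace (5 * S k)%nat with (5 + 5 * k)%nat by lia.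
  rewrite pow_add, S_INR, Ropp_plus_distr, exp_plus, (exp_Ropp 1), Rmult_comm.
  assert (Hexp1 : 0.8 ^ 5 <= / exp 1).
  { pose proof exp_le_3. pose proof (exp_pos 1).
    apply Rmult_le_reg_r with (exp 1); auto. field_simplify; [|lra]. simpl; lra. }
  apply Rmult_le_compat; auto; left; apply pow_lt; lra.
Qed.

Lemma exists_nat_between t : 0 <= t -> exists k : nat, t <= INR k <= t + 1.
Proof.
  intros Ht. destruct (archimed t) as [Hup Hup1].
  assert (Hz : (0 <= up t)%Z) by (apply le_IZR; lra).
  exists (Z.to_nat (up t)). rewrite INR_IZR_INZ, Z2Nat.id by easy. lra.
Qed.

Lemma pow08_mul5_mul_le l r eps k : 0 < l -> 0 < r -> 0 < eps ->
  ln (r / l) + ln (1 / eps) <= INR k -> 0.8 ^ (5 * k) * r <= eps * l.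
Proof.
  intros Hl Hr Heps Hk.
  assert (Hrl : 0 < r / l) by (apply Rdiv_lt_0_compat; lra).
  assert (Heps' : 0 < 1 / eps) by (apply Rdiv_lt_0_compat; lra).
  pose proof (Rmult_lt_0_compat _ _ Hrl Heps').
  assert (Hexp : exp (- (ln (r / l) + ln (1 / eps))) = eps * l / r).
  { rewrite <- ln_mult, exp_Ropp, exp_ln by assumption. field; lra. }
  pose proof (pow08_mul5_le_exp k).
  pose proof (exp_le_compat (- INR k) _ (Ropp_le_contravar _ _ Hk)).
  apply Rle_trans with (eps * l / r * r); [apply Rmult_le_compat_r; lra|].
  right; field; lra.
Qed.

Section Run.
Variables (l r eps : R) (ch : nat -> bool).
Hypotheses (Hl : 0 < l) (Heps : 0 < eps) (Heps1 : eps <= 0.1).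

Lemma gridpt_lt_grid_bound k : gridpt l eps k <= r -> (k < grid_bound l r eps)%nat.
Proof.
  intros Hk. unfold gridpt, grid_bound in *.
  set (x := ln (r / l) / ln (1 + eps)).
  assert (Hln : 0 < ln (1 + eps)) by (rewrite <- ln_1; apply ln_increasing; lra).
  assert (Hkx : INR k <= x).
  { unfold x. apply Rmult_le_reg_r with (ln (1 + eps)); auto.
    field_simplify; [|lra]. rewrite <- ln_pow by lra.
    apply ln_le_compat; [apply pow_lt; lra|].
    apply Rmult_le_reg_r with l; auto. field_simplify; lra. }
  destruct (archimed x) as [Hup _].
  assert (Hz : (Z.of_nat k < up x)%Z) by (apply lt_IZR; rewrite <- INR_IZR_INZ; lra).
  lia.
Qed.

Lemma In_grid p : In p (grid l r eps) <-> on_grid l eps p /\ p <= r.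
Proof.
  unfold grid. rewrite filter_In, Rleb_true_iff, in_map_iff. split.
  - intros [[k [<- _]] Hr]. split; [now exists k | easy].
  - intros [[k ->] Hr]. split; [|easy]. exists k. split; [easy|].
    apply in_seq. split; [lia|]. now apply gridpt_lt_grid_bound.
Qed.

Lemma grid_segment_grid : grid_segment l eps (grid l r eps).
Proof.
  split.
  - apply NoDup_filter, NoDup_map_NoDup_ForallPairs; [|apply seq_NoDup].
    intros j k _ _ Hjk. fold (gridpt l eps j) (gridpt l eps k) in Hjk.
    destruct (Nat.lt_trichotomy j k) as [Hlt|[Heq|Hlt]]; auto;
      apply (gridpt_lt_iff l eps Hl Heps) in Hlt; lra.
  - exists l, r. intros p. rewrite In_grid. split.
    + intros [Hp Hr]. pose proof (on_grid_ge l eps Hl Heps p Hp). repeat split; auto; lra.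
    + intros [Hp Hr]. split; [easy | lra].
Qed.

Lemma S_seq_grid_segment n : grid_segment l eps (S_seq l r eps ch n).
Proof.
  induction n as [|n IH]; [apply grid_segment_grid|]. cbn [S_seq].
  destruct (20 <=? length (S_seq l r eps ch n))%nat; [|easy].
  unfold step; destruct (ch n); now apply restrict_grid_segment.
Qed.

Lemma width_S_seq_le n :
  (20 <= length (S_seq l r eps ch n))%nat -> width (S_seq l r eps ch n) <= 0.8 ^ n * r.
Proof.
  induction n as [|n IH]; intros Hlen; cbn [S_seq pow] in *.
  - assert (Hne : grid l r eps <> nil) by (intros E; rewrite E in Hlen; simpl in Hlen; lia).
    destruct (proj1 (In_grid _) (lmax_In _ Hne)) as [_ Hr].
    destruct (proj1 (In_grid _) (lmin_In _ Hne)) as [Hm _].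
    pose proof (on_grid_ge l eps Hl Heps _ Hm). unfold width. lra.
  - destruct (20 <=? length (S_seq l r eps ch n))%nat eqn:E.
    + apply Nat.leb_le in E.
      pose proof (width_step_le l eps Hl Heps (ch n) _ Heps1 (S_seq_grid_segment n) E).
      specialize (IH E). lra.
    + apply Nat.leb_gt in E. lia.
Qed.

Lemma S_seq_length_lt n :
  0.8 ^ n * r < 19 * eps * l -> (length (S_seq l r eps ch n) < 20)%nat.
Proof.
  intros Hsmall. destruct (Nat.lt_ge_cases (length (S_seq l r eps ch n)) 20) as [|Hlen];
    [easy | exfalso].
  assert (Hne : S_seq l r eps ch n <> nil) by (intros E; rewrite E in Hlen; simpl in Hlen; lia).
  pose proof (width_S_seq_le n Hlen).
  pose proof (grid_segment_width_ge l eps Hl Heps _ (S_seq_grid_segment n) Hlen).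
  pose proof (grid_segment_lmin_ge l eps Hl Heps _ (S_seq_grid_segment n) Hne).
  nra.
Qed.
End Run.

Theorem lemma3p3 (l r eps : R) (ch : nat -> bool) :
  0 < eps <= 0.1 -> 0 < l <= r ->
  exists n : nat, (length (S_seq l r eps ch n) < 20)%nat /\ INR n <= Rtilde l r eps.
Proof.
  intros [Heps Heps1] [Hl Hlr].
  set (L := ln (r / l)); set (E := ln (1 / eps)).
  assert (HL : 0 <= L).
  { rewrite <- ln_1. apply ln_le_compat; [lra|].
    apply Rmult_le_reg_r with l; [lra | field_simplify; lra]. }
  assert (HE : 1 <= E).
  { rewrite <- (ln_exp 1). apply ln_le_compat; [apply exp_pos|].
    pose proof exp_le_3. pose proof (exp_pos 1).
    apply Rmult_le_reg_r with eps; [lra | field_simplify; nra]. }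
  destruct (exists_nat_between (L + E)) as [k [Hk Hk1]]; [lra|].
  exists (5 * k)%nat. split.
  - apply S_seq_length_lt; auto.
    pose proof (pow08_mul5_mul_le l r eps k Hl ltac:(lra) Heps Hk).
    pose proof (Rmult_lt_0_compat _ _ Heps Hl). lra.
  - unfold Rtilde; fold L E. rewrite mult_INR. simpl (INR 5). nra.
Qed.
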